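(* There is a closed subset $B$ of $2^\omega$ such that $\lambda(B)>1/2$ and for each $x\in B$ we have $flip_n(x)\notin B$ for infinitely many $n\in\omega$.
   Context: $\lambda$ is the standard product (Haar/coin-tossing) measure on $2^\omega$. For $n\in\omega$, $flip_n\colon2^\omega\to2^\omega$ is given by $flip_n(x)=x+\chi_{\{n\}}$ (addition coordinatewise mod 2), i.e. it changes the $n$-th coordinate of $x$. *)

From HB Require Import structures.
From mathcomp Require Import all_boot all_order all_algebra.
From mathcomp Require Import all_classical all_reals all_analysis.
Set Implicit Arguments. Unset Strict Implicit. Unset Printing Implicit Defensive.
Import Order.TTheory GRing.Theory Num.Theory.
Local Open Scope classical_set_scope.
Local Open Scope ring_scope.

(* 2^omega = cantor_space (nat -> bool with the product topology). *)

Definition cyl (s : seq bool) : set cantor_space :=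
  [set x | forall i, (i < size s)%N -> x i = nth false s i].

(* On Borel sets (in particular closed sets) this is the product measure. *)
Definition lambda (R : realType) (A : set cantor_space) : \bar R :=
  ereal_inf [set (\sum_(k <oo) (((2 : R) ^- size (s k))%:E))%E
            | s in [set s : nat -> seq bool | A `<=` \bigcup_k cyl (s k)]].

Definition flip (n : nat) (x : cantor_space) : cantor_space :=
  fun k => if k == n then ~~ x k else x k.

From HB Require Import structures.
From mathcomp Require Import all_boot all_order all_algebra.
From mathcomp Require Import all_classical all_reals all_analysis.
From mathcomp Require Import ring lra.
Import Order.TTheory GRing.Theory Num.Theory.
Local Open Scope classical_set_scope.

(* Cut the coordinates into consecutive blocks; block j holds 2^(j+3) data
   bits followed by j+3 check bits, and it passes when the check bits equal
   its syndrome, the XOR of the binary expansions of the positions of the set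
   data bits.  B is the set of sequences in which every block fails; each block
   depends on finitely many coordinates, so B is closed.  Flipping data bit a
   of block j changes the syndrome by the binary expansion of a, so some flip
   inside any given block makes it pass and leads out of B.
   Block j passes with probability 2^-(j+3), so by the union bound B has
   measure at least 1 - sum_j 2^-(j+3) = 3/4.  Since lambda is an outer measure
   built from cylinder covers, this is proved by compactness, which reduces to
   finite covers, and a martingale g on finite prefixes u: g(u) is the union
   bound for the conditional measure of B given u, g(empty) = 3/4, every cover
   of B inside the cylinder [u] has weight at least g(u) 2^-|u| (induction on
   the length of the covering strings), and g(u) > 0 forces [u] to meet B
   (follow the child with the larger value of g). *)

Definition nchecks (j : nat) : nat := j + 3.

Fixpoint block_start (j : nat) : nat :=
  if j is j'.+1 then block_start j' + 2 ^ nchecks j' + nchecks j' else 0.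

Definition check_pos (j i : nat) : nat := block_start j + 2 ^ nchecks j + i.

Definition bitn (a i : nat) : bool := odd (a %/ 2 ^ i).

Definition syndrome (j : nat) (x : nat -> bool) (i : nat) : bool :=
  \big[addb/false]_(a < 2 ^ nchecks j) (x (block_start j + a) && bitn a i).

Definition checks_pass (j : nat) (x : nat -> bool) (k : nat) : bool :=
  all (fun i => x (check_pos j i) == syndrome j x i) (iota 0 k).

Definition parity_fail : set cantor_space :=
  [set x | forall j, ~~ checks_pass j x (nchecks j)].

Lemma block_startS j : block_start j.+1 = check_pos j (nchecks j).
Proof. by rewrite /check_pos /= addnA. Qed.

Lemma leq_block_start j : j <= block_start j.
Proof.
elim: j => //= j IH.
by rewrite -addnA -addn1 leq_add // addn_gt0 expn_gt0.
Qed.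

Lemma bitn_surj r (e : nat -> bool) :
  exists2 a, a < 2 ^ r & forall i, i < r -> bitn a i = e i.
Proof.
elim: r => [|r [a lt_a bits_a]]; first by exists 0.
exists (a + e r * 2 ^ r).
  rewrite expnS mul2n -addnn; apply: leq_trans (_ : a.+1 + 2 ^ r <= _).
    by rewrite addSn ltnS leq_add2l; case: (e r); rewrite ?mul1n ?mul0n.
  by rewrite leq_add2r.
move=> i; rewrite ltnS leq_eqVlt => /orP [/eqP ->|lt_ir].
  rewrite /bitn divnDr ?dvdn_mull // divn_small // add0n mulnK ?expn_gt0 //.
  by case: (e r).
have -> : e r * 2 ^ r = e r * 2 ^ (r - i) * 2 ^ i.
  by rewrite -mulnA -expnD subnK // ltnW.
rewrite /bitn divnDr ?dvdn_mull // mulnK ?expn_gt0 // oddD oddM oddX.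
by rewrite subn_eq0 leqNgt lt_ir /= andbF addbF -bits_a.
Qed.

Lemma syndrome_ext j (x y : nat -> bool) i :
  (forall p, p < block_start j + 2 ^ nchecks j -> x p = y p) ->
  syndrome j x i = syndrome j y i.
Proof. by move=> exy; apply: eq_bigr => a _; rewrite exy // ltn_add2l. Qed.

Lemma checks_pass_ext j (x y : nat -> bool) k :
  (forall p, p < check_pos j k -> x p = y p) ->
  checks_pass j x k = checks_pass j y k.
Proof.
move=> exy; apply: eq_in_all => i; rewrite mem_iota add0n => /andP [_ lt_ik].
rewrite exy; last by rewrite ltn_add2l.
rewrite (@syndrome_ext j x y) // => p lt_p; apply: exy.
by apply: leq_trans lt_p _; rewrite leq_addr.
Qed.

Lemma syndrome_flip j (x : cantor_space) a i : a < 2 ^ nchecks j ->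
  syndrome j (flip (block_start j + a) x) i = syndrome j x i (+) bitn a i.
Proof.
move=> lt_a; rewrite /syndrome (bigD1 (Ordinal lt_a)) //=.
rewrite [in RHS](bigD1 (Ordinal lt_a)) //= /flip eqxx.
rewrite (eq_bigr (fun k : 'I__ => x (block_start j + k) && bitn k i)).
  by case: (x _); case: (bitn a i); case: (\big[_/_]_(_ | _) _).
by move=> k; rewrite -val_eqE eqn_add2l => /negbTE ->.
Qed.

Lemma flip_checks_pass j (x : cantor_space) :
  exists2 a, a < 2 ^ nchecks j &
    checks_pass j (flip (block_start j + a) x) (nchecks j).
Proof.
have [a lt_a bits_a] :=
  bitn_surj (nchecks j) (fun i => x (check_pos j i) (+) syndrome j x i).
exists a => //; apply/allP => i; rewrite mem_iota add0n => /andP [_ lt_i].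
have data_ne_check : check_pos j i == block_start j + a = false.
  by rewrite /check_pos -addnA eqn_add2l gtn_eqF // ltn_addr.
rewrite syndrome_flip // bits_a // /flip data_ne_check.
by case: (x _); case: (syndrome _ _ _).
Qed.

Lemma nbhs_agree (x : cantor_space) N :
  nbhs x [set y : cantor_space | forall p, p < N -> y p = x p].
Proof.
elim: N => [|N IH]; first by apply: filterS filterT => y _ p.
have nbhs_N : nbhs x [set y : cantor_space | y N = x N].
  by apply: (@proj_continuous nat (fun=> bool) N x [set x N]); apply: discrete_set1.
apply: filterS (filterI IH nbhs_N) => y [agree_y yN] p.
by rewrite ltnS leq_eqVlt => /orP [/eqP ->|/agree_y].
Qed.

Lemma open_finitary (P : set cantor_space) N :
  (forall x y, (forall p, p < N -> y p = x p) -> P x -> P y) -> open P.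
Proof.
by move=> finP; rewrite openE => x Px; apply: filterS (nbhs_agree x N) => y /finP; apply.
Qed.

Lemma cyl_open s : open (cyl s).
Proof.
by apply: (@open_finitary _ (size s)) => x y agree xs i lt_i; rewrite agree ?xs.
Qed.

Lemma parity_fail_closed : closed parity_fail.
Proof.
have -> : parity_fail = \bigcap_(j in setT) ~` [set x | checks_pass j x (nchecks j)].
  by apply/seteqP; split => x xB j //=; [move=> _; apply/negP | apply/negP/xB].
apply: closed_bigI => j _; rewrite closedC.
apply: (@open_finitary _ (check_pos j (nchecks j))) => x y agree.
by rewrite /= (@checks_pass_ext _ x y) // => p /agree ->.
Qed.

Lemma cyl_mkseq (u : seq bool) (x : cantor_space) :
  cyl u x <-> mkseq x (size u) = u.
Proof.
split => [xu | ux i lt_i]; last by rewrite -ux nth_mkseq.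
by apply: (@eq_from_nth _ false); rewrite size_mkseq // => i lt_i; rewrite nth_mkseq // xu.
Qed.

Lemma cyl_rcons (u : seq bool) b (x : cantor_space) :
  cyl (rcons u b) x <-> cyl u x /\ x (size u) = b.
Proof.
split => [xub | [xu xb] i]; last first.
  by rewrite size_rcons ltnS leq_eqVlt nth_rcons => /orP [/eqP ->|/[dup] lt_i /xu ->];
    rewrite ?ltnn ?eqxx ?lt_i.
split; last by rewrite xub ?size_rcons // nth_rcons ltnn eqxx.
by move=> i lt_i; rewrite xub ?nth_rcons ?lt_i // size_rcons ltnS ltnW.
Qed.

Lemma cyl_prefix {s u : seq bool} {x : cantor_space} :
  cyl s x -> cyl u x -> (size s <= size u)%N -> prefix s u.
Proof.
move=> /cyl_mkseq xs /cyl_mkseq xu le_su.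
by rewrite prefixE -xu /mkseq -map_take take_iota (minn_idPl le_su) -/(mkseq x _) xs.
Qed.

Lemma nth_prefix {T : eqType} (x0 : T) {s t : seq T} {i} :
  prefix s t -> (i < size s)%N -> nth x0 s i = nth x0 t i.
Proof. by move=> /prefixP [t' ->] lt_i; rewrite nth_cat lt_i. Qed.

Local Open Scope ring_scope.

Section SubmartingalePath.
Variables (R : realType) (g : seq bool -> R).
Hypothesis g_submart : forall u, 2 * g u <= g (rcons u false) + g (rcons u true).

Let best_child (u : seq bool) := rcons u (g (rcons u false) <= g (rcons u true)).

Fixpoint greedy_path (u : seq bool) (n : nat) : seq bool :=
  if n is n'.+1 then best_child (greedy_path u n') else u.

Lemma size_greedy_path u n : size (greedy_path u n) = (size u + n)%N.
Proof. by elim: n => [|n IH] /=; rewrite ?addn0 // size_rcons IH addnS. Qed.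

Lemma prefix_greedy_path u {m n} : (m <= n)%N -> prefix (greedy_path u m) (greedy_path u n).
Proof.
elim: n => [|n IH]; first by rewrite leqn0 => /eqP ->; apply: prefix_refl.
rewrite leq_eqVlt => /orP [/eqP -> | /IH]; first exact: prefix_refl.
by move/prefix_trans; apply; apply: prefix_rcons.
Qed.

Lemma greedy_path_ge u n : g u <= g (greedy_path u n).
Proof.
elim: n => //= n IH; apply: le_trans IH _; rewrite /best_child.
set v := greedy_path u n; have := g_submart v.
by case: (leP (g (rcons v false)) (g (rcons v true))) => ? ?; lra.
Qed.

Lemma submartingale_path u :
  exists2 x : cantor_space, cyl u x & forall n, g u <= g (mkseq x (size u + n)).
Proof.
pose x : cantor_space := fun p => nth false (greedy_path u p.+1) p.
have x_greedy n : mkseq x (size u + n) = greedy_path u n.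
  apply: (@eq_from_nth _ false); rewrite size_mkseq ?size_greedy_path // => p lt_p.
  rewrite nth_mkseq // /x.
  rewrite (nth_prefix _ (prefix_greedy_path _ (leq_maxl p.+1 n))) ?size_greedy_path;
    last by rewrite addnS ltnS leq_addl.
  by rewrite -(nth_prefix _ (prefix_greedy_path _ (leq_maxr p.+1 n))) ?size_greedy_path.
exists x => [|n]; last by rewrite x_greedy greedy_path_ge.
by apply/cyl_mkseq; rewrite -[size u]addn0 x_greedy.
Qed.

End SubmartingalePath.

Arguments submartingale_path {R g}.

Lemma pow2V_ge0 (R : realType) n : 0 <= (2 : R) ^- n.
Proof. by rewrite invr_ge0 exprn_ge0. Qed.

Lemma pow2V_anti (R : realType) m n : (m <= n)%N -> (2 : R) ^- n <= 2 ^- m.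
Proof. by move=> le_mn; rewrite lef_pV2 ?posrE ?exprn_gt0 // ler_eXn2l // ltr1n. Qed.

Lemma pow2VS (R : realType) n : (2 : R) ^- n.+1 = 2 ^- n / 2.
Proof. by rewrite exprSr invfM. Qed.

Section CylinderCovers.
Variables (R : realType) (A : set cantor_space) (g : seq bool -> R).
Hypothesis g_le1 : forall u, g u <= 1.
Hypothesis g_submart : forall u, 2 * g u <= g (rcons u false) + g (rcons u true).
Hypothesis g_pos_meets : forall u, 0 < g u -> exists2 x, A x & cyl u x.

Let weight (s : seq bool) : R := 2 ^- size s.

Let weight_ge0 s : 0 <= weight s := pow2V_ge0 R (size s).

Lemma prefix_cover_weight_ge (S : seq (seq bool)) (u : seq bool) :
  has [pred s | prefix s u] S -> g u * weight u <= \sum_(s <- S) weight s.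
Proof.
move=> /hasP [s sS su]; rewrite (big_rem s sS) /=.
have le_us : weight u <= weight s by apply: pow2V_anti; apply: size_prefix.
have := g_le1 u; have := weight_ge0 u.
have : 0 <= \sum_(t <- rem s S) weight t by apply: sumr_ge0.
nra.
Qed.

Lemma cover_long {S : seq (seq bool)} {u : seq bool} :
  ~~ has [pred s | prefix s u] S -> A `&` cyl u `<=` \bigcup_(s in [set` S]) cyl s ->
  forall x, A x -> cyl u x -> exists2 s, s \in S & (size u < size s)%N /\ cyl s x.
Proof.
move=> no_prefix cover x Ax ux; have [s sS sx] := cover x (conj Ax ux).
exists s => //; split => //; rewrite ltnNge; apply: contra (hasPn no_prefix s sS).
by move=> /(cyl_prefix sx ux).
Qed.

Lemma cover_weight_ge (S : seq (seq bool)) (u : seq bool) :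
  A `&` cyl u `<=` \bigcup_(s in [set` S]) cyl s ->
  g u * weight u <= \sum_(s <- S) weight s.
Proof.
suff bound n v (T : seq (seq bool)) : (forall s, s \in T -> size s <= size v + n)%N ->
    A `&` cyl v `<=` \bigcup_(s in [set` T]) cyl s ->
    g v * weight v <= \sum_(s <- T) weight s.
  apply: (bound (\max_(s <- S) size s)) => s sS.
  by rewrite (leq_trans _ (leq_addl _ _)) // (leq_bigmax_seq s sS).
elim: n v T => [|n IH] v T short cover;
  (have [/prefix_cover_weight_ge // | no_prefix] := boolP (has [pred s | prefix s v] T));
  have long := cover_long no_prefix cover.
  apply: le_trans (sumr_ge0 _ (fun s _ => weight_ge0 s)).
  apply: mulr_le0_ge0 (weight_ge0 v); rewrite leNgt; apply/negP.
  move=> /g_pos_meets [x Ax vx]; have [s sS [lt_vs _]] := long x Ax vx.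
  by have := short s sS; rewrite addn0 leqNgt lt_vs.
pose T_ b := [seq s <- T | nth false s (size v) == b].
have child_bound b : g (rcons v b) * weight (rcons v b) <= \sum_(s <- T_ b) weight s.
  apply: IH => [s | x [Ax /cyl_rcons [vx xb]]].
    by rewrite mem_filter size_rcons addSnnS => /andP [_ /short].
  have [s sS [lt_vs sx]] := long x Ax vx.
  by exists s => //; rewrite /= mem_filter sS -(sx _ lt_vs) xb eqxx.
have -> : \sum_(s <- T) weight s = \sum_(s <- T_ false) weight s + \sum_(s <- T_ true) weight s.
  rewrite !big_filter (bigID (fun s => nth false s (size v))) addrC /=.
  by congr (_ + _); apply: eq_bigl => s; case: nth.
move: (child_bound false) (child_bound true) (g_submart v) (weight_ge0 v).
rewrite /weight !size_rcons pow2VS; nra.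
Qed.

Lemma lambda_ge (A_compact : compact A) : ((g [::])%:E <= lambda R A)%E.
Proof.
apply: le_ereal_inf_tmp => _ [sq cover_sq <-].
move: A_compact; rewrite compact_cover => /(_ nat setT (cyl \o sq)) [k _ | //|].
  exact: cyl_open.
move=> D _ subcover.
set K := (\max_(k <- finmap.enum_fset D) k).+1.
have := @cover_weight_ge (map sq (index_iota 0 K)) [::].
rewrite /weight expr0 invr1 mulr1 big_map => /(_ _)/wrap[].
  move=> x [Ax _]; have [k Dk xk] := subcover x Ax.
  by exists (sq k) => //; apply: map_f; rewrite mem_index_iota ltnS (leq_bigmax_seq k Dk).
move=> bound; apply: le_trans (nneseries_lim_ge K _) => [|k _ _].
  by rewrite sumEFin lee_fin.
by rewrite lee_fin pow2V_ge0.
Qed.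

End CylinderCovers.

Arguments lambda_ge {R A g}.

Definition checks_seen (j l : nat) : nat :=
  minn (nchecks j) (l - (block_start j + 2 ^ nchecks j)).

(* The conditional probability, given the prefix [u], that all checks of
   block [j] pass. *)
Definition pass_prob (R : realType) (j : nat) (u : seq bool) : R :=
  2 ^- (nchecks j - checks_seen j (size u)) *
  (checks_pass j (nth false u) (checks_seen j (size u)))%:R.

(* [2 * 2 ^- nchecks (size u)] is the total passing probability of the blocks
   [j >= size u], none of which has started. *)
Definition fail_bound (R : realType) (u : seq bool) : R :=
  1 - 2 * 2 ^- nchecks (size u) - \sum_(j < size u) pass_prob R j u.

Section FailBound.
Variable R : realType.

Lemma pass_prob_ge0 j u : 0 <= pass_prob R j u.
Proof. by rewrite mulr_ge0 ?pow2V_ge0 ?ler0n. Qed.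

Lemma pass_prob_unseen j u : (size u <= block_start j + 2 ^ nchecks j)%N ->
  pass_prob R j u = 2 ^- nchecks j.
Proof.
move=> le_u; rewrite /pass_prob /checks_seen.
have /eqP -> : (size u - (block_start j + 2 ^ nchecks j) == 0)%N by rewrite subn_eq0.
by rewrite minn0 subn0 mulr1.
Qed.

Lemma pass_prob_complete j u : (block_start j.+1 <= size u)%N ->
  pass_prob R j u = (checks_pass j (nth false u) (nchecks j))%:R.
Proof.
rewrite /pass_prob block_startS => le_u; have -> : checks_seen j (size u) = nchecks j.
  apply/minn_idPl; rewrite leq_subRL; first exact: le_u.
  exact: leq_trans (leq_addr _ _) le_u.
by rewrite subnn expr0 invr1 mul1r.
Qed.

Lemma checks_pass_rcons j u b i : (check_pos j i = size u) ->
  checks_pass j (nth false (rcons u b)) i.+1 =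
  checks_pass j (nth false u) i && (b == syndrome j (nth false u) i).
Proof.
move=> pos_i; rewrite /checks_pass -addn1 iotaD all_cat /= andbT add0n.
have prefix_eq p : (p < size u)%N -> nth false (rcons u b) p = nth false u p.
  by move=> lt_p; rewrite nth_rcons lt_p.
congr andb; first by apply: checks_pass_ext => p; rewrite pos_i => /prefix_eq.
rewrite pos_i nth_rcons ltnn eqxx; congr (_ == _); apply: syndrome_ext => p lt_p.
by apply: prefix_eq; rewrite -pos_i (leq_trans lt_p) ?leq_addr.
Qed.

Lemma pass_prob_rcons j u :
  pass_prob R j (rcons u false) + pass_prob R j (rcons u true) = 2 * pass_prob R j u.
Proof.
have [lt_u | le_u] := ltnP (size u) (block_start j + 2 ^ nchecks j).
  by rewrite !pass_prob_unseen ?size_rcons ?(ltnW lt_u) //; ring.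
have [lt_u' | le_u'] := ltnP (size u) (block_start j.+1); last first.
  rewrite !pass_prob_complete ?size_rcons ?(leqW le_u') //.
  have same b : checks_pass j (nth false (rcons u b)) (nchecks j) =
                checks_pass j (nth false u) (nchecks j).
    apply: checks_pass_ext => p; rewrite -block_startS => lt_p.
    by rewrite nth_rcons (leq_trans lt_p le_u').
  by rewrite !same; ring.
set i := (size u - (block_start j + 2 ^ nchecks j))%N.
have lt_i : (i < nchecks j)%N by rewrite ltn_subLR // -block_startS.
have pos_i : check_pos j i = size u by rewrite /check_pos subnKC.
have seen_u : checks_seen j (size u) = i by apply/minn_idPr/ltnW.
have seen_u1 : checks_seen j (size u).+1 = i.+1.
  by rewrite /checks_seen subSn //; apply/minn_idPr.
rewrite /pass_prob !size_rcons seen_u seen_u1 !checks_pass_rcons //.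
rewrite -(subnSK lt_i) pow2VS.
by case: checks_pass; case: syndrome; rewrite /= ?mulr0 ?mulr1 ?addr0 ?add0r; field.
Qed.

Lemma fail_bound_rcons u :
  fail_bound R (rcons u false) + fail_bound R (rcons u true) = 2 * fail_bound R u.
Proof.
have fresh b : pass_prob R (size u) (rcons u b) = 2 ^- nchecks (size u).
  by rewrite pass_prob_unseen // size_rcons -addn1 leq_add ?leq_block_start ?expn_gt0.
have old : \sum_(j < size u) pass_prob R j (rcons u false) +
    \sum_(j < size u) pass_prob R j (rcons u true) = 2 * \sum_(j < size u) pass_prob R j u.
  by rewrite -big_split mulr_sumr; apply: eq_bigr => j _; apply: pass_prob_rcons.
move: old; rewrite /fail_bound !size_rcons !big_ord_recr /= !fresh.
rewrite [nchecks (size u).+1]/nchecks addSn pow2VS; lra.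
Qed.

Lemma fail_bound_submart u :
  2 * fail_bound R u <= fail_bound R (rcons u false) + fail_bound R (rcons u true).
Proof. by rewrite fail_bound_rcons. Qed.

Lemma fail_bound_nil : fail_bound R [::] = 3 / 4.
Proof. by rewrite /fail_bound big_ord0 /=; field. Qed.

Lemma fail_bound_le1 u : fail_bound R u <= 1.
Proof.
have : 0 <= \sum_(j < size u) pass_prob R j u.
  by apply: sumr_ge0 => j _; apply: pass_prob_ge0.
by have := pow2V_ge0 R (nchecks (size u)); rewrite /fail_bound; lra.
Qed.

Lemma fail_bound_pos_checks u j : 0 < fail_bound R u ->
  (block_start j.+1 <= size u)%N -> ~~ checks_pass j (nth false u) (nchecks j).
Proof.
move=> pos le_u; have lt_j : (j < size u)%N := leq_trans (leq_block_start _) le_u.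
apply/negP => pass; move: pos; rewrite /fail_bound (bigD1 (Ordinal lt_j)) //=.
rewrite pass_prob_complete // pass /= mulr1n.
have : 0 <= \sum_(k < size u | k != Ordinal lt_j) pass_prob R k u.
  by apply: sumr_ge0 => k _; apply: pass_prob_ge0.
by have := pow2V_ge0 R (nchecks (size u)); lra.
Qed.

Lemma fail_bound_pos_meets u :
  0 < fail_bound R u -> exists2 x, parity_fail x & cyl u x.
Proof.
move=> pos; have [x ux path_ge] := submartingale_path fail_bound_submart u.
exists x => // j; set v := mkseq x (size u + block_start j.+1).
have := fail_bound_pos_checks v j (lt_le_trans pos (path_ge _)).
rewrite size_mkseq leq_addl => /(_ isT).
rewrite (@checks_pass_ext j _ x) // => p lt_p.
by rewrite nth_mkseq // ltn_addl // block_startS.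
Qed.

End FailBound.

Theorem proposition6p2 (R : realType) :
  exists B : set cantor_space,
    closed B /\
    (((1 / 2 : R)%:E < lambda R B)%E) /\
    (forall x, B x -> forall m : nat, exists n : nat, (m <= n)%N /\ ~ B (flip n x)).
Proof.
exists parity_fail; split; first exact: parity_fail_closed.
split.
  apply: (@lt_le_trans _ _ (fail_bound R [::])%:E).
    by rewrite fail_bound_nil lte_fin; lra.
  apply: (lambda_ge (@fail_bound_le1 R) (@fail_bound_submart R) (@fail_bound_pos_meets R)).
  exact: subclosed_compact parity_fail_closed cantor_space_compact (subsetT _).
move=> x _ m; have [a _ pass] := flip_checks_pass m x.
exists (block_start m + a)%N; split; first exact: leq_trans (leq_block_start m) (leq_addr _ _).
by move=> /(_ m); rewrite pass.
Qed.
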